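(* Let $k\ge 4$ be an integer and let $\alpha_1,\ldots,\alpha_k$ be the (complex) roots of $f_k(X)=X^k-X^{k-1}-\cdots-X-1$. Then $$|\alpha_i-\alpha_j|>\frac{1}{k^{6.6}\,(\pi/e)^{k}}\qquad\text{for all }1\le i<j\le k.$$
   Context: $f_k(X)=X^k-X^{k-1}-\cdots-X-1$ is the characteristic polynomial of the $k$-generalized Fibonacci sequence; its roots are distinct. *)

From HB Require Import structures.
From mathcomp Require Import all_boot all_order all_algebra.
From mathcomp Require Import complex.
From mathcomp Require Import all_classical all_reals all_analysis.
Set Implicit Arguments. Unset Strict Implicit. Unset Printing Implicit Defensive.
Import Order.TTheory GRing.Theory Num.Theory.
Local Open Scope ring_scope.

Definition fk (F : nzRingType) (k : nat) : {poly F} :=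
  'X^k - \sum_(i < k) 'X^i.

From HB Require Import structures.
From mathcomp Require Import all_boot all_order all_algebra.
From mathcomp Require Import complex.
From mathcomp Require Import all_classical all_reals all_analysis.
From mathcomp Require Import ring lra zify.
Import Order.TTheory GRing.Theory Num.Theory numFieldNormedType.Exports.
Local Open Scope ring_scope.
Local Open Scope complex_scope.

(* Multiplying f_k by X - 1 shows that every root a satisfies
   g(a) = a^k (a - 2) + 1 = 0.  For two roots a, b with |b| <= |a| and
   d = b - a, expanding g(b) - g(a) = 0 to second order around a gives
       d a^(k-1) w = -(k a^(k-1) d^2 + X (b - 2)),
   where w = (k+1) a - 2k (so that g'(a) = a^(k-1) w) and X is the Taylor
   remainder of b^k at a, with 2|X| <= k(k-1) |a|^(k-2) |d|^2.  The roots
   satisfy |a| >= 1/2 and |w| >= 1/2 (a root cannot sit near the critical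
   point 2k/(k+1) of g), whence |w| <= (5k^2 - 3k)/2 |d| and 1 <= 6k^2|d|.
   The paper's bound 1/(k^6.6 (pi/e)^k) is weaker than 1/(6k^2): it only
   remains to check k^6 <= k^6.6, 6k^2 < k^6 and e < pi; the last follows
   from e <= 2.8 (by squaring exp(1/32) <= 32/31) and pi^2 >= 8 (since
   cos(pi/2) = 0 while cos y > 1 - y^2/2 for 0 < y, y^2 < 30). *)

Section ComplexNorm.
Context {R : rcfType}.
Implicit Types x y : R[i].
Local Notation normc := (@Normc.normc R).

Lemma normc_ge0 x : 0 <= normc x.
Proof. by case: x => u v; exact: sqrtr_ge0. Qed.

Lemma normc_gt0 x : x != 0 -> 0 < normc x.
Proof.
move=> x0; rewrite lt_neqAle normc_ge0 andbT eq_sym.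
by apply: contra x0 => /eqP/Normc.eq0_normc ->.
Qed.

Lemma normcX x n : normc (x ^+ n) = normc x ^+ n.
Proof.
elim: n => [|n IH]; first by rewrite !expr0 Normc.normc1.
by rewrite !exprS Normc.normcM IH.
Qed.

Lemma normc_natr n : normc n%:R = n%:R.
Proof. by rewrite normcMn Normc.normc1. Qed.

Lemma normcB_le x y : normc (x - y) <= normc x + normc y.
Proof. by rewrite -(normcN y) le_normcD. Qed.

Lemma normc_lerB x y : normc x - normc y <= normc (x - y).
Proof. by have := le_normcD (x - y) y; rewrite subrK; lra. Qed.

Lemma normcB2_le x : normc (x - 2) <= normc x + 2.
Proof. by have := normcB_le x 2; rewrite (normc_natr 2). Qed.

End ComplexNorm.

(* Multiplying f_k by X - 1: every root of f_k is a root of X^k (X - 2) + 1. *)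
Lemma fk_root_eq (F : comNzRingType) k (a : F) :
  root (fk F k) a -> a ^+ k * (a - 2) = -1.
Proof.
rewrite /root /fk hornerD hornerN hornerXn horner_sum.
under eq_bigr do rewrite hornerXn.
move=> /eqP fa.
have geom : a ^+ k - 1 = (a - 1) * \sum_(i < k) a ^+ i by rewrite subrX1.
have : (a - 1) * (a ^+ k - \sum_(i < k) a ^+ i) = 0 by rewrite fa mulr0.
rewrite mulrBr -geom => e.
have -> : a ^+ k * (a - 2) = (a - 1) * a ^+ k - (a ^+ k - 1) - 1 by ring.
by rewrite e sub0r.
Qed.

Lemma root_difference_identity (F : comNzRingType) m (a b : F) :
  b ^+ m.+2 * (b - 2) - a ^+ m.+2 * (a - 2) =
    (b - a) * a ^+ m.+1 * ((m.+3)%:R * a - 2 * (m.+2)%:R)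
    + (m.+2)%:R * a ^+ m.+1 * (b - a) ^+ 2
    + (b ^+ m.+2 - a ^+ m.+2 - (m.+2)%:R * a ^+ m.+1 * (b - a)) * (b - 2).
Proof.
rewrite (exprS a m.+1).
have -> : (m.+3)%:R = (m.+2)%:R + 1 :> F by rewrite natr1.
ring.
Qed.

Lemma natr_lt_exp32 (R : realFieldType) n : (2 <= n)%N -> n%:R < (3 / 2 : R) ^+ n.
Proof.
elim: n => [//|n IH] hn.
have [n_le1|n_gt1] := leqP n 1.
  have -> : n = 1%N by apply/eqP; rewrite eqn_leq n_le1 -ltnS hn.
  rewrite expr2; lra.
have := IH n_gt1; rewrite exprS -natr1.
have : 2 <= n%:R :> R by rewrite ler_nat.
lra.
Qed.

Section RootSeparation.
Variable R : rcfType.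
Local Notation normc := (@Normc.normc R).

Lemma taylor2_remainder (a b : R[i]) m : normc b <= normc a ->
  2 * normc (b ^+ m.+2 - a ^+ m.+2 - (m.+2)%:R * a ^+ m.+1 * (b - a))
  <= (m.+2)%:R * (m.+1)%:R * normc a ^+ m * normc (b - a) ^+ 2.
Proof.
move=> ba; set d := b - a.
elim: m => [|m IH].
  have -> : b ^+ 2 - a ^+ 2 - 2%:R * a ^+ 1 * d = d ^+ 2 by rewrite /d; ring.
  rewrite normcX expr0 mulr1; lra.
set T := b ^+ m.+2 - a ^+ m.+2 - _ in IH.
have step : b ^+ m.+3 - a ^+ m.+3 - (m.+3)%:R * a ^+ m.+2 * d =
    b * T + (m.+2)%:R * a ^+ m.+1 * d ^+ 2.
  have -> : (m.+3)%:R = (m.+2)%:R + 1 :> R[i] by rewrite natr1.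
  by rewrite /T /d (exprS b m.+2) (exprS a m.+2) (exprS a m.+1); ring.
rewrite step; apply: le_trans (ler_wpM2l _ (le_normcD _ _)) _ => //.
rewrite !Normc.normcM normcX normc_natr expr2.
set Q := normc a ^+ m.+1 * (normc d * normc d).
have bT : 2 * (normc b * normc T) <= (m.+2)%:R * (m.+1)%:R * Q.
  apply: (@le_trans _ _ (normc a * (2 * normc T))).
    by rewrite mulrCA ler_wpM2r ?mulr_ge0 ?normc_ge0.
  apply: le_trans (ler_wpM2l (normc_ge0 a) IH) _.
  by rewrite /Q [normc a ^+ m.+1]exprS expr2 le_eqVlt; apply/orP; left; apply/eqP; ring.
by rewrite -!mulrA -/Q; move: bT; rewrite -!natr1; lra.
Qed.

Lemma normc_root_eq n (a : R[i]) :
  a ^+ n * (a - 2) = -1 -> normc a ^+ n * normc (a - 2) = 1.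
Proof. by move=> ea; rewrite -normcX -Normc.normcM ea normcN Normc.normc1. Qed.

(* Roots of z^(n+2) (z - 2) + 1 are not small: otherwise |a^(n+2) (a-2)| < 1. *)
Lemma root_norm_ge_half n (a : R[i]) : a ^+ n.+2 * (a - 2) = -1 -> 1 / 2 <= normc a.
Proof.
move=> /normc_root_eq e1; rewrite leNgt; apply/negP => small.
have A0 := normc_ge0 a; have V0 := normc_ge0 (a - 2).
have P0 : 0 <= normc a ^+ n.+2 by exact: exprn_ge0.
have P_le : normc a ^+ n.+2 <= 1 / 4.
  have Q1 : normc a ^+ n <= 1 by rewrite exprn_ile1 //; lra.
  have Q0 : 0 <= normc a ^+ n by exact: exprn_ge0.
  by rewrite -addn2 exprD expr2; nra.
have := normcB2_le a; move: e1 P_le P0 V0.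
move: (normc a ^+ n.+2) (normc (a - 2)) => P V; nra.
Qed.

(* A root a stays away from the critical point 2(n+2)/(n+3) of
   z^(n+2) (z - 2): the quantity w = g'(a) / a^(n+1) has modulus >= 1/2.
   Otherwise |a| > 3/2 and (n+3)|a - 2| > 3/2, so that
   n+3 = |a|^(n+2) (n+3)|a - 2| > (3/2)^(n+3), which is false. *)
Lemma root_deriv_ge_half n (a : R[i]) : (2 <= n)%N ->
  a ^+ n.+2 * (a - 2) = -1 -> 1 / 2 <= normc ((n.+3)%:R * a - 2 * (n.+2)%:R).
Proof.
move=> n2 /normc_root_eq e1.
set w := _ - _; rewrite leNgt; apply/negP => small.
have n2R : 2 <= n%:R :> R by rewrite ler_nat.
have nS2 : (n.+2)%:R = n%:R + 2 :> R by rewrite -addn2 natrD.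
have nS3 : (n.+3)%:R = n%:R + 3 :> R by rewrite -addn3 natrD.
have far_from_2 : 3 / 2 < (n%:R + 3) * normc (a - 2).
  have eN : (n.+3)%:R * (a - 2) = - (2 - w) by rewrite /w -[(n.+3)%:R]natr1; ring.
  have := congr1 normc eN; rewrite normcN Normc.normcM normc_natr nS3 => ->.
  by have := normc_lerB 2 w; rewrite (normc_natr 2); lra.
have a_large : 3 / 2 < normc a.
  have eN : (n.+3)%:R * a = 2 * (n.+2)%:R - - w by rewrite /w opprK addrC subrK.
  have := normc_lerB (2 * (n.+2)%:R) (- w).
  rewrite -eN !Normc.normcM (normc_natr 2) !normc_natr normcN nS2 nS3 => low.
  rewrite ltNge; apply/negP => a_le.
  have : (n%:R + 3) * normc a <= (n%:R + 3) * (3 / 2) by rewrite ler_wpM2l //; lra.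
  lra.
have pow_le : (3 / 2) ^+ n.+2 <= normc a ^+ n.+2 by rewrite lerXn2r ?nnegrE //; lra.
have pow0 : 0 <= (3 / 2 : R) ^+ n.+2 by apply: exprn_ge0; lra.
have PV : normc a ^+ n.+2 * ((n%:R + 3) * normc (a - 2)) = n%:R + 3.
  by rewrite mulrCA e1 mulr1.
have := @natr_lt_exp32 R n.+3 isT; rewrite exprS nS3 => n3_lt.
have : (3 / 2) ^+ n.+2 * (3 / 2) <= (3 / 2) ^+ n.+2 * ((n%:R + 3) * normc (a - 2)).
  by rewrite ler_wpM2l //; lra.
have : (3 / 2) ^+ n.+2 * ((n%:R + 3) * normc (a - 2)) <=
       normc a ^+ n.+2 * ((n%:R + 3) * normc (a - 2)).
  by rewrite ler_wpM2r //; lra.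
rewrite PV; lra.
Qed.

Lemma root_separation n (a b : R[i]) : (2 <= n)%N ->
  a ^+ n.+2 * (a - 2) = -1 -> b ^+ n.+2 * (b - 2) = -1 -> a != b ->
  normc b <= normc a -> 1 <= 6 * (n.+2)%:R ^+ 2 * normc (b - a).
Proof.
move=> n2 ea eb ab ba.
set d := b - a; set P := a ^+ n.+1; set w := (n.+3)%:R * a - 2 * (n.+2)%:R.
set X := b ^+ n.+2 - a ^+ n.+2 - (n.+2)%:R * P * d.
have w_ge : 1 / 2 <= normc w by exact: root_deriv_ge_half.
have a_ge : 1 / 2 <= normc a by exact: root_norm_ge_half ea.
have X_le : 2 * normc X <= (n.+2)%:R * (n.+1)%:R * normc a ^+ n * normc d ^+ 2.
  exact: taylor2_remainder.
have b2_le : normc (b - 2) <= 5 * normc a by have := normcB2_le b; lra.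
have expansion : normc d * normc P * normc w <=
                 (n.+2)%:R * normc P * normc d ^+ 2 + normc X * normc (b - 2).
  have iden := root_difference_identity _ n a b.
  rewrite eb ea subrr -/d -/P -/w -/X in iden.
  have E : d * P * w = - ((n.+2)%:R * P * d ^+ 2 + X * (b - 2)).
    by apply/eqP; rewrite -subr_eq0 opprK addrA -iden.
  rewrite -!Normc.normcM E normcN; apply: le_trans (le_normcD _ _) _.
  by rewrite !Normc.normcM normc_natr expr2.
have d0 : 0 < normc d by apply: normc_gt0; rewrite subr_eq0 eq_sym.
have a0 : 0 < normc a by lra.
have eP : normc P = normc a * normc a ^+ n by rewrite normcX exprS.
have X_b2 : normc X * normc (b - 2) <=
            (n.+2)%:R * normc P * normc d ^+ 2 * (5 / 2 * (n.+1)%:R).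
  apply: le_trans (ler_wpM2l (normc_ge0 X) b2_le) _.
  by have := ler_wpM2r (ltW a0) X_le; rewrite eP; lra.
have w_le : normc w <= normc d * ((n.+2)%:R * (1 + 5 / 2 * (n.+1)%:R)).
  have Pd0 : 0 < normc P * normc d by rewrite mulr_gt0 // eP mulr_gt0 ?exprn_gt0.
  rewrite -(ler_pM2l Pd0); apply: le_trans (le_trans _ expansion) _.
    by rewrite (mulrC (normc P)).
  by move: X_b2; rewrite expr2; lra.
have coef : (n.+2)%:R * (1 + 5 / 2 * (n.+1)%:R) <= 3 * (n.+2)%:R ^+ 2 :> R.
  rewrite expr2 -[(n.+2)%:R]natr1; have := ler0n R n.+1; nra.
by have := ler_wpM2l (ltW d0) coef; lra.
Qed.

End RootSeparation.

Lemma fk_root_separation (R : rcfType) k (a b : R[i]) : (4 <= k)%N ->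
  root (fk _ k) a -> root (fk _ k) b -> a != b ->
  1 <= 6 * k%:R ^+ 2 * Normc.normc (a - b).
Proof.
case: k => [|[|n]] // n2 /fk_root_eq ea /fk_root_eq eb ab.
have [ba|ab_lt] := leP (Normc.normc b) (Normc.normc a).
  by rewrite -normcN opprB; exact: root_separation.
by apply: root_separation => //; [rewrite eq_sym | exact: ltW].
Qed.

Section PiAndE.
Variable R : realType.

(* Second-order Taylor lower bound for cos: the tail of the alternating
   series is positive as long as its terms decrease, which holds for y^2 < 30. *)
Lemma cos_gt_taylor2 (y : R) : 0 < y -> y ^+ 2 < 30 -> 1 - y ^+ 2 / 2 < cos y.
Proof.
move=> y0 y30.
have cvg_cos := @cvg_cos_coeff' R y.
rewrite -(cvg_lim (@Rhausdorff R) cvg_cos).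
have -> : 1 - y ^+ 2 / 2 = \sum_(0 <= i < 2) cos_coeff' y i.
  rewrite big_nat_recr//= big_nat_recr//= big_nil add0r /cos_coeff'.
  by rewrite expr0z expr1z expr0 mul1r mulN1r divr1 mulNr.
apply: lt_sum_lim_series; [by move/cvgP in cvg_cos | move=> d].
rewrite /cos_coeff'.
set N := (2 + d.*2)%N.
have -> : (2 + d.*2.+1)%N = N.+1 by rewrite /N addnS.
have -> : (-1 : R) ^ N = 1 by rewrite -exprnP -signr_odd oddD odd_double.
have -> : (-1 : R) ^ N.+1 = -1 by rewrite -exprnP -signr_odd /= oddD odd_double.
rewrite mul1r mulN1r.
have -> : y ^+ (N.+1).*2 = y ^+ 2 * y ^+ N.*2 by rewrite -exprD add2n doubleS.
have -> : ((N.+1).*2)`!%:R = (N.*2.+2)%:R * (N.*2.+1)%:R * (N.*2)`!%:R :> R.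
  by rewrite doubleS !factS !natrM mulrA.
have F0 : 0 < (N.*2)`!%:R :> R by rewrite ltr0n fact_gt0.
have Y0 : 0 < y ^+ N.*2 by rewrite exprn_gt0.
have AB : 30 <= (N.*2.+2)%:R * (N.*2.+1)%:R :> R.
  by rewrite -natrM ler_nat /N -!mul2n; nia.
set F := ((N.*2)`!)%:R : R in F0 *; set Y := y ^+ N.*2 in Y0 *.
set A := (N.*2.+2)%:R * (N.*2.+1)%:R : R in AB *.
rewrite mulNr subr_gt0 invfM mulrA ltr_pM2r ?invr_gt0 // mulrAC.
by rewrite -[ltRHS]mul1r ltr_pM2r // ltr_pdivrMr ?mul1r; lra.
Qed.

(* Since cos (pi/2) = 0, the Taylor bound forces (pi/2)^2 >= 2. *)
Lemma pi_sqr_ge8 : 8 <= (pi : R) ^+ 2.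
Proof.
rewrite leNgt; apply/negP => pi_small.
have pihalf0 : 0 < (pi : R) / 2 by rewrite divr_gt0 // pi_gt0.
have sq : (pi / 2) ^+ 2 < 2 :> R by rewrite expr_div_n ltr_pdivrMr //; lra.
have sq30 : (pi / 2) ^+ 2 < 30 :> R by lra.
by have := cos_gt_taylor2 (pi / 2) pihalf0 sq30; rewrite cos_pihalf; lra.
Qed.

(* exp(1/32) <= 32/31 since exp(-x) >= 1 - x; then square five times. *)
Lemma expR1_le : expR 1 <= 28 / 10 :> R.
Proof.
set y := expR (1 / 32 : R).
have y0 : 0 < y by rewrite expR_gt0.
have inv : y * expR (- (1 / 32)) = 1 by rewrite /y -expRD subrr expR0.
have lowN : 1 - 1 / 32 <= expR (- (1 / 32) : R).
  by have := expR_ge1Dx (- (1 / 32) : R); lra.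
have y1 : y <= 32 / 31 by nra.
have -> : expR 1 = y ^+ 32 by rewrite /y -expRM_natl; congr expR; field.
have sqr_le (p : nat) (c : R) : y ^+ p <= c -> y ^+ p.*2 <= c ^+ 2.
  move=> le; rewrite -addnn exprD -expr2 lerXn2r ?nnegrE //.
  - exact: exprn_ge0 (ltW y0).
  - by apply: le_trans le; exact: exprn_ge0 (ltW y0).
have y2 : y ^+ 2 <= 1066 / 1000.
  by apply: le_trans (sqr_le 1%N _ y1) _; rewrite expr2; lra.
have y4 : y ^+ 4 <= 1137 / 1000 by apply: le_trans (sqr_le 2%N _ y2) _; rewrite expr2; lra.
have y8 : y ^+ 8 <= 1293 / 1000 by apply: le_trans (sqr_le 4%N _ y4) _; rewrite expr2; lra.
have y16 : y ^+ 16 <= 1672 / 1000 by apply: le_trans (sqr_le 8%N _ y8) _; rewrite expr2; lra.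
by apply: le_trans (sqr_le 16%N _ y16) _; rewrite expr2; lra.
Qed.

Lemma expR1_lt_pi : expR 1 < pi :> R.
Proof. by have := pi_sqr_ge8; have := expR1_le; have := pi_gt0 R; rewrite expr2; nra. Qed.

End PiAndE.

Lemma exprn_le_powR (R : realType) (x r : R) n :
  1 <= x -> n%:R <= r -> x ^+ n <= x `^ r.
Proof.
move=> x1 nr; rewrite -powR_mulrn; last by lra.
by apply: ler_powR.
Qed.

Theorem theorem2 (R : realType) (k : nat) (hk : (4 <= k)%N)
  (a b : R[i]) (ha : root (fk _ k) a) (hb : root (fk _ k) b) (hab : a != b) :
  1 / ((k%:R `^ (66 / 10 : R)) * (pi / expR 1) ^+ k) < Normc.normc (a - b).
Proof.
have sep : 1 <= 6 * k%:R ^+ 2 * Normc.normc (a - b) by exact: fk_root_separation.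
have k4 : 4 <= k%:R :> R by rewrite ler_nat.
have k6_le : k%:R ^+ 6 <= k%:R `^ (66 / 10 : R) by apply: exprn_le_powR; lra.
have pi_e : 1 <= (pi / expR 1 : R) ^+ k.
  by apply: exprn_ege1; rewrite ler_pdivlMr ?expR_gt0 // mul1r ltW // expR1_lt_pi.
have k6_gt : 6 * (k%:R : R) ^+ 2 < k%:R ^+ 6.
  have -> : k%:R ^+ 6 = k%:R ^+ 2 * (k%:R ^+ 2 * k%:R ^+ 2) :> R by rewrite -!exprD.
  have k2 : 16 <= k%:R ^+ 2 :> R by rewrite expr2; nra.
  rewrite [6 * _]mulrC ltr_pM2l; [nra | lra].
have D0 := normc_ge0 (a - b).
have k6_0 : 0 < (k%:R : R) ^+ 6 by apply: exprn_gt0; lra.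
rewrite ltr_pdivrMr; last by apply: mulr_gt0; lra.
have : k%:R ^+ 6 * Normc.normc (a - b) <= k%:R `^ (66 / 10 : R) * Normc.normc (a - b).
  by rewrite ler_wpM2r.
have : k%:R `^ (66 / 10 : R) * Normc.normc (a - b) <=
       k%:R `^ (66 / 10 : R) * Normc.normc (a - b) * (pi / expR 1) ^+ k.
  by rewrite ler_peMr // mulr_ge0 //; lra.
nra.
Qed.
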